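(* Let $(L,\{\cdot,\cdot,\cdot\},\alpha)$ be a 3-Hom-pre-Lie algebra. Then $(L,[\cdot,\cdot,\cdot]_C,\alpha)$, where $[x,y,z]_C=\{x,y,z\}+\{y,z,x\}+\{z,x,y\}$, is a 3-Hom-Lie algebra.
   Context: A 3-Hom-Lie algebra is a triple $(L,[\cdot,\cdot,\cdot],\alpha)$ with $[\cdot,\cdot,\cdot]:\wedge^3L\to L$ skew-symmetric trilinear and $\alpha:L\to L$ linear satisfying $[\alpha(x),\alpha(y),[u,v,w]]=[[x,y,u],\alpha(v),\alpha(w)]+[\alpha(u),[x,y,v],\alpha(w)]+[\alpha(u),\alpha(v),[x,y,w]]$ for all $x,y,u,v,w\in L$. A 3-Hom-pre-Lie algebra is a triple $(L,\{\cdot,\cdot,\cdot\},\alpha)$ with $\{\cdot,\cdot,\cdot\}:L\otimes L\otimes L\to L$ trilinear and $\alpha:L\to L$ linear such that, with $[x,y,z]_C=\{x,y,z\}+\{y,z,x\}+\{z,x,y\}$, for all $x,y,z,u,v\in L$: $\{x,y,z\}=-\{y,x,z\}$; $\{\alpha(x),\alpha(y),\{z,u,v\}\}=\{[x,y,z]_C,\alpha(u),\alpha(v)\}+\{\alpha(z),[x,y,u]_C,\alpha(v)\}+\{\alpha(z),\alpha(u),\{x,y,v\}\}$; $\{[x,y,z]_C,\alpha(u),\alpha(v)\}=\{\alpha(x),\alpha(y),\{z,u,v\}\}+\{\alpha(y),\alpha(z),\{x,u,v\}\}+\{\alpha(z),\alpha(x),\{y,u,v\}\}$. *)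

From mathcomp Require Import all_boot all_order all_algebra.
Set Implicit Arguments. Unset Strict Implicit. Unset Printing Implicit Defensive.
Import GRing.Theory.
Local Open Scope ring_scope.

Definition trilinear (K : fieldType) (L : lmodType K) (f : L -> L -> L -> L) :=
  (forall (a : K) (x x' y z : L), f (a *: x + x') y z = a *: f x y z + f x' y z) /\
  (forall (a : K) (x y y' z : L), f x (a *: y + y') z = a *: f x y z + f x y' z) /\
  (forall (a : K) (x y z z' : L), f x y (a *: z + z') = a *: f x y z + f x y z').

(* Skew-symmetric: changes sign under transposition of any two arguments
   (transpositions (12) and (23) generate S_3). *)
Definition skew3 (K : fieldType) (L : lmodType K) (f : L -> L -> L -> L) :=
  (forall x y z : L, f y x z = - f x y z) /\
  (forall x y z : L, f x z y = - f x y z).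

Definition linmap (K : fieldType) (L : lmodType K) (al : L -> L) :=
  forall (a : K) (x y : L), al (a *: x + y) = a *: al x + al y.

Definition is_3HomLie (K : fieldType) (L : lmodType K)
    (br : L -> L -> L -> L) (al : L -> L) :=
  [/\ trilinear br, skew3 br, linmap al &
   forall x y u v w : L,
     br (al x) (al y) (br u v w) =
       br (br x y u) (al v) (al w) + br (al u) (br x y v) (al w)
       + br (al u) (al v) (br x y w)].

Definition bracketC (K : fieldType) (L : lmodType K)
    (op : L -> L -> L -> L) : L -> L -> L -> L :=
  fun x y z => op x y z + op y z x + op z x y.

Definition is_3HomPreLie (K : fieldType) (L : lmodType K)
    (op : L -> L -> L -> L) (al : L -> L) :=
  [/\ trilinear op, linmap al,
   (forall x y z : L, op x y z = - op y x z),
   (forall x y z u v : L,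
     op (al x) (al y) (op z u v) =
       op (bracketC op x y z) (al u) (al v)
       + op (al z) (bracketC op x y u) (al v)
       + op (al z) (al u) (op x y v)) &
   (forall x y z u v : L,
     op (bracketC op x y z) (al u) (al v) =
       op (al x) (al y) (op z u v) + op (al y) (al z) (op x u v)
       + op (al z) (al x) (op y u v))].

(* Both claims about [.,.,.]_C are identities between integer combinations of
   iterated {.,.,.}-monomials in the atoms x, y, ..., alpha x, alpha y, ...;
   alpha never has to be expanded.  Skew-symmetry of [.,.,.]_C holds modulo
   skew-symmetry of {.,.,.} in its first two arguments alone, and the
   3-Hom-Lie identity for [.,.,.]_C is, modulo the same relation, a signed sum
   of seven instances of the first 3-Hom-pre-Lie identity and two instances of
   the second.  Such identities are checked by reflection: both sides are
   expanded by multilinearity into integer combinations of monomials whose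
   first two arguments are sorted, and every coefficient must vanish. *)

From HB Require Import structures.
From mathcomp Require Import all_boot all_order all_algebra.
Set Implicit Arguments. Unset Strict Implicit. Unset Printing Implicit Defensive.
Import GRing.Theory.
Local Open Scope ring_scope.

Section AdditiveMorphism.
Variables (U W : zmodType) (f : U -> W).
Hypothesis fD : {morph f : x y / x + y}.

Lemma morph_add0 : f 0 = 0.
Proof. by apply: (@addrI _ (f 0)); rewrite -fD !addr0. Qed.

Let fA : {additive U -> W} :=
  HB.pack f (GRing.isNmodMorphism.Build U W f (morph_add0, fD)).

Lemma morph_addMz x c : f (x *~ c) = f x *~ c.
Proof. exact: (raddfMz fA). Qed.

Lemma morph_add_sum I (r : seq I) (F : I -> U) :
  f (\sum_(i <- r) F i) = \sum_(i <- r) f (F i).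
Proof. exact: (raddf_sum fA). Qed.

End AdditiveMorphism.

Inductive monom := MVar of nat | MOp of monom & monom & monom.

Fixpoint monom_eqb (m n : monom) : bool :=
  match m, n with
  | MVar i, MVar j => i == j
  | MOp a b c, MOp a' b' c' =>
      [&& monom_eqb a a', monom_eqb b b' & monom_eqb c c']
  | _, _ => false
  end.

Lemma monom_eqP : Equality.axiom monom_eqb.
Proof.
elim=> [i|a IHa b IHb c IHc] [j|a' b' c'] /=; try by constructor.
  by apply: (iffP eqP) => [->|[]].
apply: (iffP and3P) => [[/IHa-> /IHb-> /IHc->] //|[<- <- <-]].
by split; [exact/IHa | exact/IHb | exact/IHc].
Qed.

HB.instance Definition _ := hasDecEq.Build monom monom_eqP.

Fixpoint monom_lt (m n : monom) : bool :=
  match m, n with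
  | MVar i, MVar j => (i < j)%N
  | MVar _, MOp _ _ _ => true
  | MOp _ _ _, MVar _ => false
  | MOp a b c, MOp a' b' c' =>
      monom_lt a a' ||
      (a == a') && (monom_lt b b' || (b == b') && monom_lt c c')
  end.

Inductive term :=
  | TVar of nat
  | TOp of term & term & term
  | TAdd of term & term
  | TOpp of term
  | TZero.

(* Skew-symmetry puts the first two arguments in [monom_lt] order; soundness
   does not depend on the order, only the uniqueness of normal forms does. *)
Definition op_monom (c : int) (m n p : monom) : int * monom :=
  if monom_lt n m then (- c, MOp n m p) else (c, MOp m n p).

Fixpoint normalize (e : term) : seq (int * monom) :=
  match e with
  | TVar i => [:: (1, MVar i)]
  | TOp a b c =>
      let nb := normalize b in let nc := normalize c in
      flatten [seq [seq op_monom (t1.1 * t2.1 * t3.1) t1.2 t2.2 t3.2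
                   | t2 <- nb, t3 <- nc] | t1 <- normalize a]
  | TAdd a b => normalize a ++ normalize b
  | TOpp a => [seq (- t.1, t.2) | t <- normalize a]
  | TZero => [::]
  end.

Definition lincomb_coef (m : monom) (l : seq (int * monom)) : int :=
  foldr (fun t c => (if t.2 == m then t.1 else 0) + c) 0 l.

Definition cancels (l : seq (int * monom)) : bool :=
  all (fun m => lincomb_coef m l == 0) (unzip2 l).

Definition hyps_diff (hs : seq (term * term)) : term :=
  foldr (fun h e => TAdd (TAdd h.1 (TOpp h.2)) e) TZero hs.

Definition certifies (hs : seq (term * term)) (e1 e2 : term) : bool :=
  cancels (normalize (TAdd (TAdd e1 (TOpp e2)) (TOpp (hyps_diff hs)))).

Lemma lincomb_coefE m l : lincomb_coef m l = \sum_(t <- l | t.2 == m) t.1.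
Proof.
elim: l => [|t l IH]; first by rewrite big_nil.
by rewrite big_cons /= IH; case: ifP; rewrite ?add0r.
Qed.

Section SkewTrilinear.
Variables (V : zmodType) (op : V -> V -> V -> V).
Hypothesis opDl : forall y z, {morph (fun x => op x y z) : x x' / x + x'}.
Hypothesis opDm : forall x z, {morph (fun y => op x y z) : y y' / y + y'}.
Hypothesis opDr : forall x y, {morph (fun z => op x y z) : z z' / z + z'}.
Hypothesis opNC : forall x y z, op x y z = - op y x z.

Variable env : seq V.

Fixpoint monom_eval (m : monom) : V :=
  match m with
  | MVar i => nth 0 env i
  | MOp a b c => op (monom_eval a) (monom_eval b) (monom_eval c)
  end.

Fixpoint term_eval (e : term) : V :=
  match e with
  | TVar i => nth 0 env i
  | TOp a b c => op (term_eval a) (term_eval b) (term_eval c)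
  | TAdd a b => term_eval a + term_eval b
  | TOpp a => - term_eval a
  | TZero => 0
  end.

Definition lincomb_eval (l : seq (int * monom)) : V :=
  \sum_(t <- l) monom_eval t.2 *~ t.1.

Lemma op_monomE c m n p :
  monom_eval (op_monom c m n p).2 *~ (op_monom c m n p).1
  = op (monom_eval m) (monom_eval n) (monom_eval p) *~ c.
Proof.
by rewrite /op_monom; case: ifP => //= _; rewrite mulrNz -mulNrz -opNC.
Qed.

Lemma op_lincomb_eval (l1 l2 l3 : seq (int * monom)) :
  op (lincomb_eval l1) (lincomb_eval l2) (lincomb_eval l3)
  = \sum_(t1 <- l1) \sum_(t2 <- l2) \sum_(t3 <- l3)
      op (monom_eval t1.2) (monom_eval t2.2) (monom_eval t3.2)
        *~ (t1.1 * t2.1 * t3.1).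
Proof.
rewrite /lincomb_eval (morph_add_sum (opDl _ _)); apply: eq_bigr => t1 _.
rewrite (morph_addMz (opDl _ _)) (morph_add_sum (opDm _ _)) mulrz_suml.
apply: eq_bigr => t2 _.
rewrite (morph_addMz (opDm _ _)) (morph_add_sum (opDr _ _)) !mulrz_suml.
apply: eq_bigr => t3 _.
by rewrite (morph_addMz (opDr _ _)) -!mulrzA mulrC (mulrC t2.1).
Qed.

Lemma lincomb_eval_normalize e : lincomb_eval (normalize e) = term_eval e.
Proof.
elim: e => [i|a IHa b IHb c IHc|a IHa b IHb|a IHa|] /=.
- by rewrite /lincomb_eval big_seq1.
- rewrite -IHa -IHb -IHc op_lincomb_eval /lincomb_eval big_flatten big_map.
  apply: eq_bigr => t1 _; rewrite big_allpairs_dep.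
  by apply: eq_bigr => t2 _; apply: eq_bigr => t3 _; rewrite op_monomE.
- by rewrite /lincomb_eval big_cat -IHa -IHb.
- rewrite -IHa /lincomb_eval big_map -sumrN.
  by apply: eq_bigr => t _; rewrite mulrNz.
- by rewrite /lincomb_eval big_nil.
Qed.

Lemma lincomb_eval_by_monom l :
  lincomb_eval l
  = \sum_(m <- undup (unzip2 l)) monom_eval m *~ lincomb_coef m l.
Proof.
under [RHS]eq_bigr => m _ do rewrite lincomb_coefE mulrz_sumr big_mkcond.
rewrite /lincomb_eval exchange_big /=; apply: eq_big_seq => t tl.
have pred1E : [pred m | t.2 == m] =1 pred1 t.2 by move=> m; exact: eq_sym.
rewrite -big_mkcond -big_filter (eq_filter pred1E).
rewrite filter_pred1_uniq ?big_seq1 //.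
  exact: undup_uniq.
by rewrite mem_undup map_f.
Qed.

Lemma lincomb_eval_cancels l : cancels l -> lincomb_eval l = 0.
Proof.
move=> /allP l0; rewrite lincomb_eval_by_monom big1_seq // => m /andP[_].
by rewrite mem_undup => /l0 /eqP->.
Qed.

Lemma term_eval_eq_certified hs e1 e2 :
  certifies hs e1 e2 ->
  foldr (fun h P => term_eval h.1 = term_eval h.2 -> P)
        (term_eval e1 = term_eval e2) hs.
Proof.
move=> /lincomb_eval_cancels; rewrite lincomb_eval_normalize /=.
elim: hs => [|h hs IH] /=.
  by rewrite oppr0 addr0 => /eqP; rewrite subr_eq0 => /eqP.
move=> e12 h_eq; apply: IH.
by rewrite h_eq subrr add0r in e12.
Qed.

End SkewTrilinear.

Ltac atom_mem a l :=
  lazymatch l with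
  | a :: _ => constr:(true)
  | _ :: ?l' => atom_mem a l'
  | _ => constr:(false)
  end.

Ltac atom_index a l :=
  lazymatch l with
  | a :: _ => constr:(0%N)
  | _ :: ?l' => let n := atom_index a l' in constr:(n.+1)
  end.

Ltac collect_atoms op t l :=
  lazymatch t with
  | ?P -> ?Q => let l := collect_atoms op P l in collect_atoms op Q l
  | ?a = ?b => let l := collect_atoms op a l in collect_atoms op b l
  | (?a + ?b)%R => let l := collect_atoms op a l in collect_atoms op b l
  | (- ?a)%R => collect_atoms op a l
  | 0%R => l
  | op ?a ?b ?c =>
      let l := collect_atoms op a l in let l := collect_atoms op b l in
      collect_atoms op c l
  | _ => lazymatch atom_mem t l with true => l | false => constr:(t :: l) end
  end.

Ltac reify_term op env t :=
  lazymatch t with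
  | (?a + ?b)%R =>
      let a := reify_term op env a in let b := reify_term op env b in
      constr:(TAdd a b)
  | (- ?a)%R => let a := reify_term op env a in constr:(TOpp a)
  | 0%R => constr:(TZero)
  | op ?a ?b ?c =>
      let a := reify_term op env a in let b := reify_term op env b in
      let c := reify_term op env c in constr:(TOp a b c)
  | _ => let i := atom_index t env in constr:(TVar i)
  end.

Ltac reify_goal op env G :=
  lazymatch G with
  | (?p = ?q) -> ?G' =>
      let p := reify_term op env p in let q := reify_term op env q in
      lazymatch reify_goal op env G' with
      | (?hs, ?e1, ?e2) => constr:(((p, q) :: hs, e1, e2))
      end
  | ?a = ?b =>
      let e1 := reify_term op env a in let e2 := reify_term op env b in
      constr:(([::] : seq (term * term), e1, e2))
  end.

Ltac skew_trilinear_solve op :=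
  lazymatch goal with
  | |- ?G =>
      let T := lazymatch type of op with ?T -> _ => T end in
      let env := collect_atoms op G (@nil T) in
      lazymatch reify_goal op env G with
      | (?hs, ?e1, ?e2) =>
          apply: (@term_eval_eq_certified _ op _ _ _ _ env hs e1 e2);
          first [assumption | by vm_compute]
      end
  end.

Lemma addrACA3 (V : nmodType) (p q r p' q' r' : V) :
  (p + p') + (q + q') + (r + r') = (p + q + r) + (p' + q' + r').
Proof. by rewrite [RHS]addrACA (addrACA p q p' q'). Qed.

Lemma trilinear_morph (K : fieldType) (L : lmodType K)
    (f : L -> L -> L -> L) :
  trilinear f ->
  [/\ forall y z, {morph (fun x => f x y z) : x x' / x + x'},
      forall x z, {morph (fun y => f x y z) : y y' / y + y'} &
      forall x y, {morph (fun z => f x y z) : z z' / z + z'}].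
Proof.
case=> fl [fm fr]; split=> a b c c'.
- by have := fl 1 c c' a b; rewrite !scale1r.
- by have := fm 1 a c c' b; rewrite !scale1r.
- by have := fr 1 a b c c'; rewrite !scale1r.
Qed.

Lemma trilinear_bracketC (K : fieldType) (L : lmodType K)
    (f : L -> L -> L -> L) :
  trilinear f -> trilinear (bracketC f).
Proof.
case=> fl [fm fr]; rewrite /bracketC.
by split; [|split] => a x x' y z; rewrite fl fm fr !scalerDr addrACA3.
Qed.

Theorem proposition3p4 (K : fieldType) (L : lmodType K)
    (op : L -> L -> L -> L) (al : L -> L) :
  [pchar K] =i pred0 ->
  is_3HomPreLie op al -> is_3HomLie (bracketC op) al.
Proof.
(* No division occurs. *)
move=> _ [op_tri al_lin opNC homA homB].
have [opDl opDm opDr] := trilinear_morph op_tri.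
split=> //; first exact: trilinear_bracketC.
  by split=> x y z; rewrite /bracketC; skew_trilinear_solve op.
move=> x y u v w; rewrite /bracketC in homA homB *.
move: (homA x y u v w) (esym (homA x y u w v)) (homA x y v w u)
  (esym (homA x u v w y)) (homB x u w v y) (homA y u v w x)
  (esym (homB y u w v x)) (homA u v x w y) (esym (homA u v y w x)).
skew_trilinear_solve op.
Qed.
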